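(* Let $G=(V,E)\in\Theta$. If $|V|\ge 3$, then the minimum degree of $G$ is $4$; and if $|V|\ge 4$, then $\Gamma(G)$ contains two non-adjacent vertices.
   Context: Graphs are finite, undirected, possibly with parallel edges. Let $Z_3$ be the graph with two vertices and three parallel edges between them. For a graph $G$ and an edge $e$ with ends $u_1,u_2$, $G(e)$ is obtained from $G-e$ by adding a new vertex $w$, two parallel edges joining $w$ and $u_1$, and two parallel edges joining $w$ and $u_2$. $\Theta$ is the smallest set of graphs containing $Z_3$ and containing $G(e)$ for every $G\in\Theta$ and every $e\in E(G)$. For a vertex $x$, $d(x)$ is its degree and $N(x)=\{u: xu\in E(G)\}$; $\Gamma(G)$ is the set of vertices $x$ with $d(x)=4$ and $|N(x)|=2$. *)

From mathcomp Require Import all_boot.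
Set Implicit Arguments. Unset Strict Implicit. Unset Printing Implicit Defensive.

(* A finite multigraph (parallel edges allowed) on the vertex type V is given
   by its edge-multiplicity function  mult : V -> V -> nat ;
   mult x y = number of edges joining x and y (symmetric; mult x x = loops). *)

Definition Z3_mult (x y : bool) : nat := if x != y then 3 else 0.

(* G(e) for an edge e with ends u1, u2: remove one copy of e, add a new vertex
   w (= None), two parallel edges w u1 and two parallel edges w u2. *)
Definition split_mult (V : finType) (m : V -> V -> nat) (u1 u2 : V)
  (x y : option V) : nat :=
  match x, y with
  | Some a, Some b =>
      m a b - (if ((a == u1) && (b == u2)) || ((a == u2) && (b == u1)) then 1 else 0)
  | None, Some b => 2 * (b == u1) + 2 * (b == u2)
  | Some a, None => 2 * (a == u1) + 2 * (a == u2)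
  | None, None => 0
  end.

(* Theta: smallest class containing Z_3 and closed under G |-> G(e);
   graphs are considered up to isomorphism (relabelling of vertices). *)
Inductive Theta : forall V : finType, (V -> V -> nat) -> Prop :=
  | Theta_Z3 : Theta Z3_mult
  | Theta_split (V : finType) (m : V -> V -> nat) (u1 u2 : V) :
      Theta m -> 0 < m u1 u2 -> Theta (split_mult m u1 u2)
  | Theta_iso (V W : finType) (m : V -> V -> nat) (m' : W -> W -> nat)
      (f : W -> V) :
      Theta m -> bijective f -> (forall x y, m' x y = m (f x) (f y)) ->
      Theta m'.

(* degree: number of edge-ends at x (a loop counts twice) *)
Definition deg (V : finType) (m : V -> V -> nat) (x : V) : nat :=
  \sum_(y : V) m x y + m x x.

Definition nbhd (V : finType) (m : V -> V -> nat) (x : V) : {set V} :=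
  [set u | 0 < m x u].

Definition adjacent (V : finType) (m : V -> V -> nat) (x y : V) : bool :=
  0 < m x y.

Definition Gamma (V : finType) (m : V -> V -> nat) : {set V} :=
  [set x | (deg m x == 4) && (#|nbhd m x| == 2)].

Definition min_degree_is (V : finType) (m : V -> V -> nat) (k : nat) : Prop :=
  (exists x : V, deg m x = k) /\ (forall x : V, k <= deg m x).

From mathcomp Require Import all_boot zify.
Set Implicit Arguments. Unset Strict Implicit. Unset Printing Implicit Defensive.

(* Induction along the construction of Theta, with the invariant strengthened
   by: for at least 3 vertices, every edge u v misses some vertex of Gamma.
   Splitting an edge u1 u2 creates a vertex w in Gamma whose only neighbours
   are u1 and u2, and a Gamma vertex x off the edge u1 u2 stays in Gamma; so
   w and x are non-adjacent Gamma vertices. The strengthened clause survives: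
   w lies off every edge between old vertices, and x lies off the new edges
   w u1 and w u2. Splits of a two-vertex graph, which can only be Z_3, are
   checked directly: all three vertices of the result lie in Gamma. *)

Record theta_inv (V : finType) (m : V -> V -> nat) : Prop := ThetaInv {
  mult_sym : forall x y, m x y = m y x;
  mult_loop0 : forall x, m x x = 0;
  two_vertices : #|V| = 2 ->
    (forall x y, x != y -> m x y = 3) /\ (forall x, deg m x = 3);
  min_degree4 : 3 <= #|V| -> min_degree_is m 4;
  Gamma_off_edge : 3 <= #|V| -> forall u v, 0 < m u v ->
    exists x, [/\ x \in Gamma m, x != u & x != v];
  Gamma_nonadj_pair : 4 <= #|V| ->
    exists x y, [/\ x \in Gamma m, y \in Gamma m, x != y & ~~ adjacent m x y]
}.

Lemma sum_option (V : finType) (F : option V -> nat) :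
  \sum_(y : option V) F y = F None + \sum_(x : V) F (Some x).
Proof.
rewrite (bigD1 None) //=; congr (_ + _).
rewrite (reindex_omap Some id) //=; last by case.
by apply: eq_bigl => x; rewrite eqxx.
Qed.

Lemma sum_eq_indicator (V : finType) (u : V) : \sum_(x : V) (x == u : nat) = 1.
Proof. by rewrite (bigD1 u) //= eqxx big1 // => x /negbTE ->. Qed.

Section Isomorphism.
Variables (V W : finType) (m : V -> V -> nat) (m' : W -> W -> nat) (f : W -> V).
Hypothesis f_bij : bijective f.
Hypothesis m'E : forall x y, m' x y = m (f x) (f y).

Lemma iso_deg x : deg m' x = deg m (f x).
Proof.
rewrite /deg m'E; congr (_ + _).
rewrite [in RHS](reindex f); last exact: onW_bij.
by apply: eq_bigr => y _; rewrite m'E.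
Qed.

Lemma iso_Gamma x : (x \in Gamma m') = (f x \in Gamma m).
Proof.
case: f_bij => g fK gK.
rewrite !inE iso_deg; suff -> : #|nbhd m' x| = #|nbhd m (f x)| by [].
rewrite -(card_imset _ (can_inj fK)) (can2_imset_pre _ fK gK).
by apply: eq_card => z; rewrite !inE m'E gK.
Qed.

Lemma theta_inv_iso : theta_inv m -> theta_inv m'.
Proof.
case=> msym mloop two mindeg off_edge nonadj.
have cardWV : #|W| = #|V| := bij_eq_card f_bij.
have [g fK gK] := f_bij.
have f_inj := can_inj fK.
split; rewrite ?cardWV.
- by move=> x y; rewrite !m'E msym.
- by move=> x; rewrite m'E mloop.
- move=> /two[m3 d3]; split; last by move=> x; rewrite iso_deg d3.
  by move=> x y xy; rewrite m'E m3 // (inj_eq f_inj).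
- move=> /mindeg[[x dx] hx]; split; last by move=> z; rewrite iso_deg.
  by exists (g x); rewrite iso_deg gK.
- move=> c3 u v; rewrite m'E => /(off_edge c3)[x [xG xu xv]].
  by exists (g x); rewrite iso_Gamma -!(inj_eq f_inj) !gK.
- move=> /nonadj[x [y [xG yG xy nadj]]].
  by exists (g x), (g y); rewrite !iso_Gamma !gK (can_eq gK) /adjacent m'E !gK.
Qed.

End Isomorphism.

Section Split.
Variables (V : finType) (m : V -> V -> nat) (u1 u2 : V).
Hypothesis msym : forall x y, m x y = m y x.
Hypothesis mloop : forall x, m x x = 0.
Hypothesis m_u1u2 : 0 < m u1 u2.
Local Notation m' := (split_mult m u1 u2).

Lemma split_ends_neq : u1 != u2.
Proof. by apply/eqP => E; move: m_u1u2; rewrite E mloop. Qed.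

Lemma split_mult_sym x y : m' x y = m' y x.
Proof.
case: x => [a|]; case: y => [b|] //=; rewrite msym.
by case: (a == u1); case: (a == u2); case: (b == u1); case: (b == u2).
Qed.

Lemma split_mult_loop0 x : m' x x = 0.
Proof. by case: x => [a|] //=; rewrite mloop. Qed.

Lemma split_multC x y : m' x y = split_mult m u2 u1 x y.
Proof.
case: x => [a|]; case: y => [b|] //=; rewrite 1?addnC //.
by case: (a == u1); case: (a == u2); case: (b == u1); case: (b == u2).
Qed.

Lemma deg_split_None : deg m' None = 4.
Proof.
by rewrite /deg sum_option /= big_split /= -!big_distrr /= !sum_eq_indicator.
Qed.

Lemma deg_split_Some a : deg m' (Some a) = deg m a + (a == u1) + (a == u2).
Proof.
rewrite /deg sum_option /= !mloop sub0n !addn0.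
set removed := fun x : V =>
  if ((a == u1) && (x == u2)) || ((a == u2) && (x == u1)) then 1 else 0.
have removed_le x : removed x <= m a x.
  rewrite /removed; case: ifP => //.
  by case/orP => /andP[/eqP-> /eqP->] //; rewrite msym.
have sum_removed : \sum_x removed x = (a == u1) + (a == u2).
  rewrite /removed; case: (a =P u1) => [->|_].
    rewrite (negbTE split_ends_neq) /= (bigD1 u2) //= eqxx.
    by rewrite big1 // => x /negbTE ->.
  case: (a =P u2) => [_|_] /=; last by rewrite big1.
  by rewrite (bigD1 u1) //= eqxx big1 // => x /negbTE ->.
rewrite sumnB; last by move=> x _; apply: removed_le.
have : \sum_x removed x <= \sum_x m a x by apply: leq_sum.
by rewrite sum_removed; lia.
Qed.

Lemma nbhd_split_None : nbhd m' None = [set Some u1; Some u2].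
Proof.
apply/setP => -[x|]; rewrite !inE //= !(inj_eq (@Some_inj _)).
by case: (x == u1); case: (x == u2).
Qed.

Lemma split_None_Gamma : None \in Gamma m'.
Proof.
by rewrite inE deg_split_None nbhd_split_None cards2 /= split_ends_neq.
Qed.

Lemma split_Some_Gamma a :
  a != u1 -> a != u2 -> (Some a \in Gamma m') = (a \in Gamma m).
Proof.
move=> /negbTE a1 /negbTE a2; rewrite !inE deg_split_Some a1 a2 !addn0.
have -> : nbhd m' (Some a) = Some @: nbhd m a.
  apply/setP => -[b|]; rewrite inE /= a1 a2 /=.
    by rewrite subn0 (mem_imset _ _ (@Some_inj _)) inE.
  by apply/esym/imsetP => -[].
by rewrite card_imset //; apply: Some_inj.
Qed.

Lemma split_None_nonadj a : a != u1 -> a != u2 -> ~~ adjacent m' (Some a) None.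
Proof. by move=> /negbTE a1 /negbTE a2; rewrite /adjacent /= a1 a2. Qed.

Lemma card2_split_ends x : #|V| = 2 -> (x == u1) || (x == u2).
Proof.
move=> c2; have : [set u1; u2] == setT.
  by rewrite eqEcard subsetT cardsT c2 cards2 split_ends_neq.
by move/eqP/setP/(_ x); rewrite !inE.
Qed.

Section TwoVertices.
Hypothesis c2 : #|V| = 2.
Hypothesis m3 : m u1 u2 = 3.
Hypothesis d3 : forall x, deg m x = 3.

Lemma card2_split_end_Gamma : Some u1 \in Gamma m'.
Proof.
rewrite inE deg_split_Some d3 eqxx (negbTE split_ends_neq) /=.
suff -> : nbhd m' (Some u1) = [set None; Some u2] by rewrite cards2.
apply/setP => -[b|]; rewrite !inE /= ?eqxx //.
case/orP: (card2_split_ends b c2) => /eqP->; rewrite !eqxx /=.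
  by rewrite mloop (inj_eq (@Some_inj _)) (negbTE split_ends_neq).
by rewrite m3.
Qed.

End TwoVertices.
End Split.

Lemma card2_split_Gamma (V : finType) (m : V -> V -> nat) (u1 u2 : V) x :
  theta_inv m -> 0 < m u1 u2 -> #|V| = 2 -> x \in Gamma (split_mult m u1 u2).
Proof.
case=> msym mloop two _ _ _ mu c2; have [m3 d3] := two c2.
have u12 := split_ends_neq mloop mu.
case: x => [a|]; last exact: split_None_Gamma.
case/orP: (card2_split_ends mloop mu a c2) => /eqP->.
  exact: card2_split_end_Gamma (m3 _ _ u12) d3.
have mu' : 0 < m u2 u1 by rewrite msym.
rewrite (iso_Gamma (m := split_mult m u2 u1) (f := id)) //.
- by apply: card2_split_end_Gamma (m3 _ _ _) d3; rewrite // eq_sym.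
- by exists id.
- exact: split_multC.
Qed.

Section SplitInvariant.
Variables (V : finType) (m : V -> V -> nat) (u1 u2 : V).
Hypothesis inv : theta_inv m.
Hypothesis m_u1u2 : 0 < m u1 u2.
Local Notation m' := (split_mult m u1 u2).
Let msym := mult_sym inv.
Let mloop := mult_loop0 inv.

Lemma card_ge2_of_edge : 2 <= #|V|.
Proof.
by have := max_card [set u1; u2]; rewrite cards2 (split_ends_neq mloop m_u1u2).
Qed.

Lemma split_min_degree4 : min_degree_is m' 4.
Proof.
split; first by exists None; rewrite deg_split_None.
case=> [a|]; last by rewrite deg_split_None.
rewrite deg_split_Some //.
have [c2|c3] : #|V| = 2 \/ 3 <= #|V| by have := card_ge2_of_edge; lia.
  have [_ d3] := two_vertices inv c2; rewrite d3.
  by case/orP: (card2_split_ends mloop m_u1u2 a c2) => ->; rewrite ?addn0 ?addn1.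
by have [_ /(_ a)] := min_degree4 inv c3; lia.
Qed.

Lemma split_Gamma_off_edge u v : 0 < m' u v ->
  exists x, [/\ x \in Gamma m', x != u & x != v].
Proof.
move=> huv.
have [c2|c3] : #|V| = 2 \/ 3 <= #|V| by have := card_ge2_of_edge; lia.
  have : ~~ ([set: option V] \subset [set u; v]).
    apply/negP => /subset_leq_card; rewrite cardsT card_option c2 cards2.
    by case: (u != v).
  case/subsetPn => x _; rewrite !inE negb_or => /andP[xu xv].
  by exists x; split => //; apply: card2_split_Gamma.
have [x [xG x1 x2]] := Gamma_off_edge inv c3 m_u1u2.
have xS : Some x \in Gamma m' by rewrite split_Some_Gamma.
have neq_x b : (Some x != Some b) = (x != b) by rewrite (inj_eq (@Some_inj _)).
move: huv; case: u => [a|]; case: v => [b|] //= huv.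
- by exists None; split => //; apply: split_None_Gamma.
- exists (Some x); rewrite !neq_x; split => //.
  by apply/eqP => xa; subst a; move: huv; rewrite (negbTE x1) (negbTE x2).
- exists (Some x); rewrite !neq_x; split => //.
  by apply/eqP => xb; subst b; move: huv; rewrite (negbTE x1) (negbTE x2).
Qed.

Lemma split_Gamma_nonadj_pair : 3 <= #|V| ->
  exists x y, [/\ x \in Gamma m', y \in Gamma m', x != y & ~~ adjacent m' x y].
Proof.
move=> c3; have [x [xG x1 x2]] := Gamma_off_edge inv c3 m_u1u2.
exists (Some x), None; split => //.
- by rewrite split_Some_Gamma.
- exact: split_None_Gamma.
- exact: split_None_nonadj.
Qed.

Lemma theta_inv_split : theta_inv m'.
Proof.
split; rewrite ?card_option.
- exact: split_mult_sym.
- exact: split_mult_loop0.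
- by move=> [c1]; have := card_ge2_of_edge; rewrite c1.
- by move=> _; apply: split_min_degree4.
- by move=> _; apply: split_Gamma_off_edge.
- exact: split_Gamma_nonadj_pair.
Qed.

End SplitInvariant.

Lemma theta_inv_Z3 : theta_inv Z3_mult.
Proof.
split; rewrite ?card_bool //.
- by do 2 case.
- by case.
- by split; [do 2 case | case; rewrite /deg big_bool].
Qed.

Lemma theta_inv_of_Theta (V : finType) (m : V -> V -> nat) :
  Theta m -> theta_inv m.
Proof.
elim=> {V m} [|V m u1 u2 _ inv mu|V W m m' f _ inv f_bij m'E].
- exact: theta_inv_Z3.
- exact: theta_inv_split.
- exact: theta_inv_iso f_bij m'E inv.
Qed.

Theorem lemma4p5 (V : finType) (m : V -> V -> nat) :
  Theta m ->
  (3 <= #|V| -> min_degree_is m 4) /\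
  (4 <= #|V| ->
     exists x y : V, [/\ x \in Gamma m, y \in Gamma m, x != y & ~~ adjacent m x y]).
Proof.
by move=> /theta_inv_of_Theta[_ _ _ mindeg _ nonadj]; split.
Qed.
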